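(* Let $k\ge 3$ and let $D$ be a digraph on $n$ vertices with $\delta^0(D)\ge\lceil (n+k)/2\rceil-1$. Let $S=(s_1,\dots,s_k)$ be a sequence of distinct vertices of $D$, let $C$ be a longest $S$-cycle in $D$, and suppose $C$ is not Hamiltonian. Let $H$ be the subdigraph of $D$ induced by $V(D)\setminus V(C)$. Then $H$ is Hamiltonian connected and $d^-_H(x)+d^+_H(y)\ge |H|+k-2$ for all (not necessarily distinct) vertices $x,y\in H$. Moreover, every digraph obtained from $H$ by deleting at most $2$ vertices is strongly connected, and $k\le |H|\le \lfloor (n-k)/2\rfloor$.
   Context: Digraphs have no loops and at most one edge in each direction between any two vertices; paths and cycles are directed. $\delta^0(D)=\min\{\delta^+(D),\delta^-(D)\}$. An $S$-cycle is a directed cycle in $D$ which encounters $s_1,\dots,s_k$ in this order. For $x\in H$, $d^+_H(x)$ and $d^-_H(x)$ denote the out- and indegree of $x$ within $H$. A digraph is strongly connected if for every ordered pair $x,y$ of vertices there is a directed $x$-$y$ path, and Hamiltonian connected if for every ordered pair of distinct vertices $x,y$ there is a directed Hamilton path from $x$ to $y$. *)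

(* A digraph on a finite vertex type T is an irreflexive
   relation e : rel T (e x y = there is an edge x -> y). *)
From mathcomp Require Import all_boot.
Set Implicit Arguments. Unset Strict Implicit. Unset Printing Implicit Defensive.

Section Digraph.
Variables (T : finType) (e : rel T).

Definition loopless := forall x : T, ~~ e x x.

Definition outdeg (x : T) := #|[set y | e x y]|.
Definition indeg (x : T) := #|[set y | e y x]|.

Definition outdeg_in (A : {set T}) (x : T) := #|[set y in A | e x y]|.
Definition indeg_in (A : {set T}) (x : T) := #|[set y in A | e y x]|.

Definition min_semideg_ge (d : nat) := forall x : T, d <= outdeg x /\ d <= indeg x.

Definition dcycle (c : seq T) := [/\ 2 <= size c, uniq c & cycle e c].

(* an S-cycle: a directed cycle meeting s_1,...,s_k in this cyclic order *)
Definition S_cycle (S c : seq T) := dcycle c /\ exists i, subseq S (rot i c).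

Definition longest_S_cycle (S c : seq T) :=
  S_cycle S c /\ forall c', S_cycle S c' -> size c' <= size c.

Definition ham_connected_on (A : {set T}) :=
  forall x y, x \in A -> y \in A -> x != y ->
    exists p : seq T, [/\ path e x p, last x p = y, uniq (x :: p)
                        & forall z, (z \in x :: p) = (z \in A)].

Definition strong_on (B : {set T}) :=
  forall u v, u \in B -> v \in B ->
    exists p : seq T, [/\ path e u p, last u p = v & all (mem B) p].
End Digraph.

(* Let C be the longest S-cycle and H the rest of D. If a path of H runs from z to w,
   then no vertex u of C has both u -> z and w -> succ(u), for the path could otherwise
   be inserted into C after u. Hence |N^-_C(z)| + |N^+_C(w)| <= |C|, and the semidegree
   bound leaves d^-_H(z) + d^+_H(w) >= |H| + k - 2. Applied to single vertices and arcs
   this excludes any proper nonempty part of H without outgoing arcs, so H is strongly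
   connected and the bound holds for all pairs of H. It gives |H| >= k, and it leaves no
   room for a separation of H after deleting fewer than k vertices. If |C| < |H| + k,
   some u on C has an out-neighbour in H and succ(u) an in-neighbour in H, and a path
   of H between them would extend C; so |H| <= (n - k)/2. Finally, identifying y with
   x reduces Hamiltonian connectivity of H to a Woodall-type criterion for Hamilton
   cycles, proved by confronting a longest cycle with a longest path outside it. *)

From mathcomp Require Import all_boot zify.
From Stdlib Require Import Classical.
Set Implicit Arguments. Unset Strict Implicit. Unset Printing Implicit Defensive.

Lemma ex_maximum (P : nat -> Prop) N : (exists m, P m) -> (forall m, P m -> m <= N) ->
  exists m, P m /\ forall m', P m' -> m' <= m.
Proof.
move=> [m0 Pm0] bounded; apply: NNPP => no_max.
suff [m [Pm ltNm]] : exists m, P m /\ N < m by have := bounded _ Pm; rewrite leqNgt ltNm.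
elim: N.+1 => [|j [m [Pm le_jm]]]; first by exists m0.
have [m' [Pm' lt_mm']] : exists m', P m' /\ m < m'.
  apply: NNPP => none; apply: no_max; exists m; split=> // m' Pm'.
  by rewrite leqNgt; apply/negP => lt; apply: none; exists m'.
by exists m'; split=> //; apply: leq_ltn_trans lt_mm'.
Qed.

Section CycleSurgery.
Variables (T : eqType) (f : rel T).

Lemma iter_next_cons (x : T) s t : uniq (x :: s) -> 0 < t <= (size s).+1 ->
  iter t (next (x :: s)) x = nth x (rcons s x) t.-1.
Proof.
case/andP=> xNs Us; elim: t => [|[|t] IH] // /andP[_ le_ts].
  change (next (x :: s) x = nth x (rcons s x) 0).
  by rewrite next_nth mem_head /= eqxx; case: s {xNs Us le_ts IH}.
have lt_ts : t < size s by [].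
rewrite iterS IH; last by rewrite /= ltnW.
rewrite [t.+1.-1]/= [t.+2.-1]/= nth_rcons lt_ts.
rewrite next_nth inE mem_nth // orbT /=.
have -> : (x == nth x s t) = false by apply: contraNF xNs => /eqP ->; rewrite mem_nth.
rewrite index_uniq // nth_rcons.
case: ltngtP => // [lt_st|->]; last by rewrite nth_default.
by move: lt_st; rewrite ltnS leqNgt lt_ts.
Qed.

Lemma exists_iter_next (s : seq T) x y : uniq s -> x \in s -> y \in s ->
  exists2 t, 0 < t <= size s & iter t (next s) x = y.
Proof.
move=> Us xs ys; move: (rot_index xs); set b := drop _ _ ++ _ => Es.
have Ub : uniq (x :: b) by rewrite -Es rot_uniq.
have size_s : size s = (size b).+1 by rewrite -(size_rot (index x s)) Es.
have iterE t : iter t (next s) x = iter t (next (x :: b)) x.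
  by apply: eq_iter => v; rewrite -Es next_rot.
have : y \in x :: b by rewrite -Es mem_rot.
rewrite inE => /predU1P[->|yb].
  exists (size s); first by rewrite size_s /=.
  by rewrite iterE size_s iter_next_cons //= nth_rcons ltnn eqxx.
have lt_yb : index y b < size b by rewrite index_mem.
exists (index y b).+1; first by rewrite size_s; lia.
rewrite iterE iter_next_cons //=; last by lia.
by rewrite nth_rcons lt_yb nth_index.
Qed.

Lemma cycle_splice_path s i t x p : uniq s -> cycle f s -> i \in s -> 0 < t <= size s ->
  uniq (x :: p) -> {in x :: p, forall v, v \notin s} ->
  f i x -> path f x p -> f (last x p) (iter t (next s) i) ->
  exists s', [/\ uniq s', cycle f s', size s' = size s - t + 1 + size (x :: p)
               & {subset s' <= s ++ x :: p}].
Proof.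
move=> Us Cs si /andP[t_gt0 le_ts] Ux Xs fix_ px fl.
move: (rot_index si); set b := drop _ _ ++ _ => Es.
have Ub : uniq (i :: b) by rewrite -Es rot_uniq.
have Cb : cycle f (i :: b) by rewrite -Es rot_cycle.
have size_s : size s = (size b).+1 by rewrite -(size_rot (index i s)) Es.
have bs v : v \in rcons b i -> v \in s by rewrite mem_rcons -Es mem_rot.
have lt_tb : t.-1 < size (rcons b i) by rewrite size_rcons -size_s prednK.
have iterE : iter t (next s) i = nth i (rcons b i) t.-1.
  rewrite -iter_next_cons -?size_s ?t_gt0 //.
  by apply: eq_iter => v; rewrite -Es next_rot.
rewrite {}iterE in fl.
pose j := nth i (rcons b i) t.-1; pose D := drop t.-1.+1 (rcons b i).
have ED : drop t.-1 (rcons b i) = j :: D := drop_nth i lt_tb.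
have [pD lD] : path f j D /\ last j D = i.
  move: Cb (last_rcons i b i); rewrite /cycle -(cat_take_drop t.-1 (rcons b i)) ED.
  by rewrite cat_path last_cat => /andP[_ /= /andP[]].
exists (j :: D ++ x :: p); split.
- rewrite -cat_cons -ED cat_uniq Ux andbT drop_uniq; last by rewrite rcons_uniq.
  by apply/hasPn => v /Xs; apply: contra => /mem_drop /bs.
- by rewrite /cycle rcons_cat cat_path pD lD /= fix_ rcons_path px fl.
- rewrite /= size_cat /= size_drop size_rcons size_s; move: le_ts t_gt0; rewrite size_s.
  by clear; lia.
- move=> v; rewrite -cat_cons -ED mem_cat mem_cat.
  by case/orP=> [/mem_drop/bs ->|->]; rewrite ?orbT.
Qed.

Lemma cycle_insert_path a u b x p : uniq (a ++ u :: b) -> cycle f (a ++ u :: b) ->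
  uniq (x :: p) -> {in x :: p, forall v, v \notin a ++ u :: b} ->
  f u x -> path f x p -> f (last x p) (next (a ++ u :: b) u) ->
  uniq (a ++ u :: (x :: p) ++ b) /\ cycle f (a ++ u :: (x :: p) ++ b).
Proof.
have rotE (s : seq T) : rot (size a) (a ++ u :: s) = u :: s ++ a by rewrite rot_size_cat.
move=> Us Cs Ux Xs fux px fl.
have [uNba Uba] : u \notin b ++ a /\ uniq (b ++ a).
  by apply/andP; rewrite -cons_uniq -rotE rot_uniq.
have Cr : cycle f (u :: b ++ a) by rewrite -rotE rot_cycle.
have {}fl : f (last x p) (next (u :: b ++ a) u) by rewrite -rotE next_rot.
rewrite -(rot_uniq (size a)) -(rot_cycle (size a)) rotE -catA.
have XNr v : v \in x :: p -> v \notin u :: b ++ a.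
  by move/Xs; rewrite -(mem_rot (size a)) rotE.
split.
- rewrite cons_uniq mem_cat negb_or uNba andbT cat_uniq Ux Uba andbT.
  apply/andP; split; first by apply: contraL (XNr u) _; apply: mem_head.
  by apply/hasPn => v vba; apply: contraL (XNr v) _; rewrite inE vba orbT.
- rewrite /cycle rcons_cons /= fux rcons_cat cat_path px /=.
  move: Cr fl; case: (b ++ a) => [|v r]; rewrite /cycle /next /= eqxx //.
  all: by move=> /andP[_ pr] ->.
Qed.

Lemma path_suffix z p v : path f z p -> uniq (z :: p) -> v \in z :: p ->
  exists q, [/\ path f v q, last v q = last z p, uniq (v :: q) & {subset v :: q <= z :: p}].
Proof.
rewrite -[path f z p]/(sorted f (z :: p)) -[last z p]/(last z (z :: p)).
move: (z :: p) => s sf Us vs; case/splitPr: vs sf Us => p1 p2.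
rewrite sorted_cat_cons cat_uniq last_cat /= => /andP[_ pv] /and3P[_ _ Uv].
by exists p2; split=> // w wv; rewrite mem_cat wv orbT.
Qed.

Lemma path_prefix z p v : path f z p -> uniq (z :: p) -> v \in z :: p ->
  exists q, [/\ path f z q, last z q = v, uniq (z :: q) & {subset z :: q <= z :: p}].
Proof.
move=> pz Uz /predU1P[->|vp].
  by exists [::]; split=> // w; rewrite inE => /eqP ->; apply: mem_head.
case/splitPr: vp pz Uz => p1 p2; rewrite -cat_rcons cat_path -cat_cons cat_uniq.
move=> /andP[pz _] /and3P[Uz _ _].
exists (rcons p1 v); split; rewrite ?last_rcons // => w.
by rewrite mem_cat => ->.
Qed.
End CycleSurgery.

Section CycleCounting.
Variable T : finType.
Implicit Types (I J X Y Z : {set T}) (s : seq T).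

Lemma card_set_uniq s : uniq s -> #|[set v in s]| = size s.
Proof. by move=> Us; rewrite cardsE; apply/card_uniqP. Qed.

Lemma disjoint_leq_card X Y Z :
  X \subset Z -> Y \subset Z -> [disjoint X & Y] -> #|X| + #|Y| <= #|Z|.
Proof.
move=> XZ YZ XY; rewrite -cardsUI (disjoint_setI0 XY) cards0 addn0.
by apply: subset_leq_card; rewrite subUset XZ YZ.
Qed.

Lemma cardsD1_in X x : x \in X -> #|X :\ x| = #|X| - 1.
Proof. by move=> xX; rewrite (cardsD1 x X) xX add1n subn1. Qed.

Variable s : seq T.
Hypothesis Us : uniq s.

Lemma next_inj : injective (next s).
Proof. exact: can_inj (prev_next Us). Qed.

Lemma next_closed_set X : X \subset [set v in s] -> X != set0 -> next s @: X \subset X ->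
  X = [set v in s].
Proof.
move=> Xs /set0Pn[x xX] closedX; apply/eqP; rewrite eqEsubset Xs /=.
have xs : x \in s by have := subsetP Xs _ xX; rewrite inE.
apply/subsetP => y; rewrite inE => ys; have [t _ <-] := exists_iter_next Us xs ys.
by elim: t => //= t IH; apply: (subsetP closedX); apply: imset_f.
Qed.

Fixpoint next_iterates I t :=
  if t is t'.+1 then next s @: (I :|: next_iterates I t') else set0.

Lemma next_iterates_sub I t : I \subset [set v in s] -> next_iterates I t \subset [set v in s].
Proof.
move=> Is; elim: t => [|t IH] /=; first exact: sub0set.
apply/subsetP => v /imsetP[w wIU ->]; rewrite inE mem_next.
have : I :|: next_iterates I t \subset [set v in s] by rewrite subUset Is IH.
by move/subsetP/(_ w wIU); rewrite inE.
Qed.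

Lemma next_iterates_mono I t : next_iterates I t \subset next_iterates I t.+1.
Proof. by elim: t => [|t IH]; [apply: sub0set | apply/imsetS/setUS]. Qed.

Lemma next_iteratesP I t v : v \in next_iterates I t ->
  exists2 i, i \in I & exists2 t', 0 < t' <= t & v = iter t' (next s) i.
Proof.
elim: t v => [|t IH] v /=; first by rewrite inE.
case/imsetP => w /setUP[wI|/IH[i iI [t' le_t't ->]]] ->; first by exists w => //; exists 1.
by exists i => //; exists t'.+1 => //; lia.
Qed.

Lemma card_next_iterates I t : I \subset [set v in s] -> I != set0 -> 0 < t ->
  next_iterates I t = [set v in s] \/ #|I| + t.-1 <= #|next_iterates I t|.
Proof.
move=> Is I0; elim: t => [|[|t] IH] // _.
  by right; rewrite /= setU0 (card_imset _ next_inj) addn0.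
have [full|ge] := IH isT.
  left; apply/eqP; rewrite eqEsubset next_iterates_sub //= -full.
  exact: next_iterates_mono.
have [sub|nsub] := boolP (I \subset next_iterates I t.+1).
  have E : next_iterates I t.+2 = next s @: next_iterates I t.+1.
    by rewrite /= (setUidPr sub).
  have fixed : next_iterates I t.+1 = next_iterates I t.+2.
    by apply/eqP; rewrite eqEcard next_iterates_mono E (card_imset _ next_inj) leqnn.
  left; rewrite -fixed; apply: next_closed_set; rewrite ?next_iterates_sub //.
    by rewrite -card_gt0; move: I0 ge; rewrite -card_gt0; lia.
  by rewrite -E -fixed.
right; rewrite [t.+2.-1]/= -[next_iterates I t.+2]/(next s @: (I :|: next_iterates I t.+1)).
rewrite (card_imset _ next_inj).
move: ge; rewrite [t.+1.-1]/= => ge.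
suff : #|next_iterates I t.+1| < #|I :|: next_iterates I t.+1| by move: ge; lia.
apply: proper_card; rewrite properEneq subsetUr andbT.
by apply: contra nsub => /eqP ->; apply: subsetUl.
Qed.

Lemma cycle_gap_card I J q : I \subset [set v in s] -> J \subset [set v in s] ->
  I != set0 -> J != set0 -> 0 < q ->
  (forall i t, i \in I -> 0 < t <= q -> t <= size s -> iter t (next s) i \notin J) ->
  #|I| + #|J| + q <= (size s).+1.
Proof.
move=> Is Js I0 J0 q_gt0 gap; pose t := minn q (size s).
have : 0 < size s.
  by case/set0Pn: I0 => i /(subsetP Is); rewrite inE; case: (s).
move=> s_gt0; have t_gt0 : 0 < t by rewrite leq_min q_gt0.
have disj : [disjoint next_iterates I t & J].
  rewrite disjoint_subset; apply/subsetP => v /next_iteratesP[i iI [t' le_t't ->]].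
  by rewrite inE; apply: gap => //; move: le_t't; rewrite /t; lia.
have [full|ge] := card_next_iterates Is I0 t_gt0.
  case/set0Pn: J0 => j jJ; have := disjointFl disj jJ.
  by rewrite full inE; have := subsetP Js _ jJ; rewrite inE => ->.
have := disjoint_leq_card (next_iterates_sub t Is) Js disj; rewrite card_set_uniq //.
by move: ge I0 J0; rewrite -!card_gt0 /t; lia.
Qed.
End CycleCounting.

Section LongCycleInPath.
Variables (T : finType) (f : rel T).

Lemma cycle_from_path_end z p (N : {set T}) : path f z p -> uniq (z :: p) ->
  N \subset [set v in z :: p] -> N != set0 -> last z p \notin N ->
  {in N, forall v, f (last z p) v} ->
  exists c, [/\ uniq c, cycle f c, {subset c <= z :: p} & #|N| < size c].
Proof.
rewrite -[path f z p]/(sorted f (z :: p)) -[last z p]/(last z (z :: p)).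
move: (z :: p) => s.
move=> sf Us Ns /set0Pn[v0 v0N] lNN lN.
case: (arg_minnP (fun v => index v s) v0N) => v vN vmin.
have vs : v \in s by have := subsetP Ns _ vN; rewrite inE.
move: sf Us Ns lNN lN vmin; case/splitPr: vs => p1 p2.
rewrite sorted_cat_cons cat_uniq last_cat /=.
move=> /andP[_ pv] /and3P[_ Np1 Uv] Ns lNN lN vmin.
have vNp1 : v \notin p1 by apply: contra Np1 => vp1; rewrite /= vp1.
exists (v :: p2); split=> //.
- by rewrite /cycle rcons_path pv lN.
- by move=> y yv; rewrite mem_cat yv orbT.
have : last v p2 |: N \subset [set y in v :: p2].
  apply/subsetP => y; rewrite in_setU1 inE => /predU1P[->|yN]; first exact: mem_last.
  have := subsetP Ns _ yN; rewrite inE mem_cat => /orP[yp1|] //.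
  have := vmin y yN; rewrite !index_cat yp1 (negbTE vNp1) /= eqxx.
  by rewrite addn0 leqNgt index_mem yp1.
by move/subset_leq_card; rewrite cardsU1 lNN card_set_uniq.
Qed.
End LongCycleInPath.


Section Degrees.
Variables (T : finType) (e : rel T).
Implicit Types (A B : {set T}) (x : T).

Lemma outdeg_split A x : outdeg e x = outdeg_in e (~: A) x + outdeg_in e A x.
Proof.
rewrite /outdeg -(cardsID A [set y | e x y]) addnC.
by congr (_ + _); apply: eq_card => v; rewrite !inE andbC.
Qed.

Lemma indeg_split A x : indeg e x = indeg_in e (~: A) x + indeg_in e A x.
Proof.
rewrite /indeg -(cardsID A [set y | e y x]) addnC.
by congr (_ + _); apply: eq_card => v; rewrite !inE andbC.
Qed.

Hypothesis e_loopless : loopless e.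

Lemma edge_neq x y : e x y -> x != y.
Proof. by apply: contraTneq => ->; apply: e_loopless. Qed.

Lemma indeg_in_leq A B x : {in A, forall v, e v x -> v \in B} -> indeg_in e A x <= #|B :\ x|.
Proof.
move=> inB; apply/subset_leq_card/subsetP => v; rewrite !inE => /andP[vA evx].
by rewrite edge_neq // inB.
Qed.

Lemma outdeg_in_leq A B x : {in A, forall v, e x v -> v \in B} -> outdeg_in e A x <= #|B :\ x|.
Proof.
move=> inB; apply/subset_leq_card/subsetP => v; rewrite !inE => /andP[vA exv].
by rewrite eq_sym edge_neq // inB.
Qed.

Lemma indeg_in_ltn A x : x \in A -> indeg_in e A x < #|A|.
Proof. by move=> xA; rewrite (cardsD1 x) xA add1n ltnS; apply: indeg_in_leq. Qed.

Lemma outdeg_in_ltn A x : x \in A -> outdeg_in e A x < #|A|.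
Proof. by move=> xA; rewrite (cardsD1 x) xA add1n ltnS; apply: outdeg_in_leq. Qed.
End Degrees.

Section Induced.
Variables (T : finType) (e : rel T).

Implicit Types (B : {set T}) (x y : T).

Definition induced B : rel T := [rel a b | [&& a \in B, b \in B & e a b]].

Lemma path_induced B x p : path (induced B) x p -> path e x p && all (mem B) p.
Proof.
elim: p x => [|y p IH] x //= /andP[/and3P[_ yB exy] /IH/andP[-> ->]].
by rewrite exy yB.
Qed.

Lemma connect_induced_path B x y : x \in B -> connect (induced B) x y ->
  exists p, [/\ path e x p, last x p = y, uniq (x :: p) & {subset x :: p <= B}].
Proof.
move=> xB /connectP[p0 pp0 ->]; case: (shortenP pp0) => p + Up _.
move=> /path_induced/andP[pp /allP pB]; exists p; split=> // v.
by rewrite inE => /predU1P[-> //|/pB].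
Qed.

Lemma strong_on_connect B :
  (forall u v, u \in B -> v \in B -> connect (induced B) u v) -> strong_on e B.
Proof.
move=> conn u v uB vB; have [p [pp lp _ pB]] := connect_induced_path uB (conn u v uB vB).
by exists p; split=> //; apply/allP => w wp; apply: pB; rewrite inE wp orbT.
Qed.
End Induced.


Section DegreeSumHamiltonCycle.
Variables (T : finType) (f : rel T) (A : {set T}).
Hypothesis f_loopless : loopless f.
Hypothesis deg_sum :
  forall a b, a \in A -> b \in A -> #|A| <= indeg_in f A a + outdeg_in f A b.

Section LongestCycleAndPath.
Variable s : seq T.
Hypotheses (Us : uniq s) (Cs : cycle f s) (sA : {subset s <= A}).
Hypothesis s_longest :
  forall s', uniq s' -> cycle f s' -> {subset s' <= A} -> size s' <= size s.

Let R := A :\: [set v in s].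

Variables (z : T) (p : seq T).
Hypotheses (Up : uniq (z :: p)) (pp : path f z p) (pR : {subset z :: p <= R}).
Hypothesis p_longest :
  forall z' p', uniq (z' :: p') -> path f z' p' -> {subset z' :: p' <= R} -> size p' <= size p.

Let w := last z p.
Let in_z := [set v in s | f v z].
Let out_w := [set v in s | f w v].

Lemma mem_R v : (v \in R) = (v \notin s) && (v \in A).
Proof. by rewrite !inE. Qed.

Lemma card_A_split : #|A| = size s + #|R|.
Proof.
have sA' : [set v in s] \subset A by apply/subsetP => v; rewrite inE => /sA.
rewrite cardsD (setIidPr sA') card_set_uniq // subnKC // -(card_set_uniq Us).
exact: subset_leq_card.
Qed.

Lemma card_R_setD_path : #|R :\: [set v in z :: p]| = #|R| - (size p).+1.
Proof.
have pR' : [set v in z :: p] \subset R by apply/subsetP => v; rewrite inE => /pR.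
by rewrite cardsD (setIidPr pR') card_set_uniq.
Qed.

Lemma size_path_lt_card_R : size p < #|R|.
Proof.
rewrite -ltnS -[(size p).+1]/(size (z :: p)) -card_set_uniq // ltnS.
by apply/subset_leq_card/subsetP => v; rewrite inE => /pR.
Qed.

Lemma in_nbr_in_R_on_path v : v \in R -> f v z -> v \in z :: p.
Proof.
move=> vR fvz; apply: contraT => vNp.
have := p_longest (z' := v) (p' := z :: p); rewrite ltnn; apply=> //=.
- by rewrite vNp.
- by rewrite fvz.
- by move=> u; rewrite inE => /predU1P[->|/pR].
Qed.

Lemma out_nbr_in_R_on_path v : v \in R -> f w v -> v \in z :: p.
Proof.
move=> vR fwv; apply: contraT => vNp.
have := p_longest (z' := z) (p' := rcons p v); rewrite size_rcons ltnn; apply.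
- by rewrite -rcons_cons rcons_uniq vNp.
- by rewrite rcons_path pp.
- by move=> u; rewrite -rcons_cons mem_rcons inE => /predU1P[->|/pR].
Qed.

Lemma indeg_z_le : indeg_in f A z <= #|in_z| + size p.
Proof.
rewrite -[size p]/(size (z :: p)).-1 -card_set_uniq //.
rewrite (cardsD1 z [set v in _]) in_set mem_head add1n.
apply: leq_trans (leq_card_setU _ _); apply/subset_leq_card/subsetP => v.
rewrite in_set => /andP[vA fvz]; rewrite in_setU in_setD1 !in_set (edge_neq f_loopless fvz).
have [vs|vNs] := boolP (v \in s); first by rewrite fvz.
by rewrite in_nbr_in_R_on_path ?orbT // mem_R vNs.
Qed.

Lemma outdeg_w_le : outdeg_in f A w <= #|out_w| + size p.
Proof.
rewrite -[size p]/(size (z :: p)).-1 -card_set_uniq //.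
rewrite (cardsD1 w [set v in _]) in_set mem_last add1n.
apply: leq_trans (leq_card_setU _ _); apply/subset_leq_card/subsetP => v.
rewrite in_set => /andP[vA fwv].
rewrite in_setU in_setD1 !in_set eq_sym (edge_neq f_loopless fwv).
have [vs|vNs] := boolP (v \in s); first by rewrite fwv.
by rewrite out_nbr_in_R_on_path ?orbT // mem_R vNs.
Qed.

(* Maximality of [s]: a path outside [s] cannot replace an arc of [s] of length [t]
   unless it is shorter. *)
Lemma splice_path_short i t x q : i \in s -> 0 < t <= size s ->
  uniq (x :: q) -> {subset x :: q <= R} -> path f x q ->
  f i x -> f (last x q) (iter t (next s) i) -> size (x :: q) < t.
Proof.
move=> si le_ts Ux xR pq fix_ fl; rewrite ltnNge; apply/negP => le_tq.
have xNs v : v \in x :: q -> v \notin s by move/xR; rewrite mem_R => /andP[].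
have [s' [Us' Cs' size_s' s's]] := cycle_splice_path Us Cs si le_ts Ux xNs fix_ pq fl.
have : size s' <= size s.
  apply: s_longest => // v /s's; rewrite mem_cat => /orP[/sA //|/xR].
  by rewrite mem_R => /andP[].
rewrite size_s'; case/andP: le_ts; move: le_tq; move: (size (x :: q)) (size s) => n m; lia.
Qed.

Lemma cycle_vertex_out_nbr_on_path c : c \in s -> #|A| - size p <= outdeg_in f A c ->
  exists2 v, v \in z :: p & f c v.
Proof.
move=> cs; have [v /andP[vp fcv]|none] := pickP [pred v in z :: p | f c v]; first by exists v.
suff : outdeg_in f A c < #|A| - size p by rewrite ltnNge => /negP.
have : outdeg_in f A c <= #|([set v in s] :\ c) :|: (R :\: [set v in z :: p])|.
  apply/subset_leq_card/subsetP => y; rewrite in_set => /andP[yA fcy].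
  rewrite in_setU in_setD1 in_setD mem_R !in_set yA andbT eq_sym (edge_neq f_loopless fcy).
  by case: (y \in s); rewrite //= andbT; apply: contraFN (none y) => yp; rewrite /= yp fcy.
move/leq_trans/(_ (leq_card_setU _ _)); rewrite card_R_setD_path card_A_split.
have := cardsD1 c [set v in s]; rewrite in_set cs card_set_uniq //.
have := size_path_lt_card_R; lia.
Qed.

Lemma cycle_vertex_in_nbr_on_path c : c \in s -> #|A| - size p <= indeg_in f A c ->
  exists2 v, v \in z :: p & f v c.
Proof.
move=> cs; have [v /andP[vp fvc]|none] := pickP [pred v in z :: p | f v c]; first by exists v.
suff : indeg_in f A c < #|A| - size p by rewrite ltnNge => /negP.
have : indeg_in f A c <= #|([set v in s] :\ c) :|: (R :\: [set v in z :: p])|.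
  apply/subset_leq_card/subsetP => y; rewrite in_set => /andP[yA fyc].
  rewrite in_setU in_setD1 in_setD mem_R !in_set yA andbT (edge_neq f_loopless fyc).
  by case: (y \in s); rewrite //= andbT; apply: contraFN (none y) => yp; rewrite /= yp fyc.
move/leq_trans/(_ (leq_card_setU _ _)); rewrite card_R_setD_path card_A_split.
have := cardsD1 c [set v in s]; rewrite in_set cs card_set_uniq //.
have := size_path_lt_card_R; lia.
Qed.

Lemma z_in_R : z \in R. Proof. exact/pR/mem_head. Qed.
Lemma w_in_R : w \in R. Proof. exact/pR/mem_last. Qed.
Lemma R_sub_A v : v \in R -> v \in A. Proof. by rewrite mem_R => /andP[]. Qed.

Lemma outdeg_lower_of_in_z0 b : in_z = set0 -> b \in A -> #|A| - size p <= outdeg_in f A b.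
Proof.
move=> in_z0 bA; have := deg_sum (R_sub_A z_in_R) bA; have := indeg_z_le.
by rewrite in_z0 cards0; lia.
Qed.

Lemma indeg_lower_of_out_w0 a : out_w = set0 -> a \in A -> #|A| - size p <= indeg_in f A a.
Proof.
move=> out_w0 aA; have := deg_sum aA (R_sub_A w_in_R); have := outdeg_w_le.
by rewrite out_w0 cards0; lia.
Qed.

Lemma out_w0_of_in_z0 : in_z = set0 -> out_w = set0.
Proof.
move=> in_z0; apply/eqP; rewrite -subset0; apply/subsetP => u; rewrite in_set => /andP[us fwu].
have cs : prev s u \in s by rewrite mem_prev.
have [v vp fcv] := cycle_vertex_out_nbr_on_path cs (outdeg_lower_of_in_z0 in_z0 (sA cs)).
have [q [pq lq Uq qp]] := path_suffix pp Up vp.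
have le_1s : 0 < 1 <= size s by case: (s) us.
have := splice_path_short cs le_1s Uq (fun y yq => pR (qp y yq)) pq fcv.
by rewrite /= next_prev // lq => /(_ fwu).
Qed.

Lemma in_z0_of_out_w0 : out_w = set0 -> in_z = set0.
Proof.
move=> out_w0; apply/eqP; rewrite -subset0; apply/subsetP => i; rewrite in_set => /andP[si fiz].
have cs : next s i \in s by rewrite mem_next.
have [v vp fvc] := cycle_vertex_in_nbr_on_path cs (indeg_lower_of_out_w0 out_w0 (sA cs)).
have [q [pq lq Uq qp]] := path_prefix pp Up vp.
have le_1s : 0 < 1 <= size s by case: (s) si.
have := splice_path_short si le_1s Uq (fun y yq => pR (qp y yq)) pq fiz.
by rewrite /= lq => /(_ fvc).
Qed.

Lemma in_z_neq0 : in_z != set0.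
Proof.
apply/eqP => in_z0; have out_w0 := out_w0_of_in_z0 in_z0.
pose Nw := [set y in A | f w y].
have NQ : Nw \subset [set v in z :: p].
  apply/subsetP => y; rewrite !in_set => /andP[yA fwy]; apply: (out_nbr_in_R_on_path _ fwy).
  rewrite mem_R yA andbT; apply: contraT => /negPn ys.
  by move/setP/(_ y): out_w0; rewrite in_set in_set0 ys fwy.
have N_big : #|A| - size p <= #|Nw| := outdeg_lower_of_in_z0 in_z0 (R_sub_A w_in_R).
have N0 : Nw != set0.
  by rewrite -card_gt0; move: N_big; rewrite card_A_split; have := size_path_lt_card_R; lia.
have wNN : w \notin Nw by rewrite in_set negb_and f_loopless orbT.
have wN : {in Nw, forall v, f w v} by move=> y; rewrite in_set => /andP[].
have [c [Uc Cc cp size_c]] :=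
  cycle_from_path_end pp Up NQ N0 wNN wN.
have := s_longest Uc Cc (fun v vc => R_sub_A (pR (cp v vc))).
by move: N_big; rewrite card_A_split; have := size_path_lt_card_R; lia.
Qed.

Lemma out_w_neq0 : out_w != set0.
Proof. by apply/eqP => /in_z0_of_out_w0/eqP; apply/negP/in_z_neq0. Qed.

Lemma no_path_off_longest_cycle : False.
Proof.
have in_z_sub : in_z \subset [set v in s] by apply/subsetP => v; rewrite !in_set => /andP[].
have out_w_sub : out_w \subset [set v in s] by apply/subsetP => v; rewrite !in_set => /andP[].
have gap i t : i \in in_z -> 0 < t <= (size p).+1 -> t <= size s ->
    iter t (next s) i \notin out_w.
  rewrite in_set => /andP[si fiz] /andP[t_gt0 le_tp] le_ts; rewrite in_set.
  apply/andP => -[_ fl]; have le_ts' : 0 < t <= size s by rewrite t_gt0.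
  by have := splice_path_short si le_ts' Up pR pp fiz fl; rewrite ltnNge le_tp.
have := cycle_gap_card Us in_z_sub out_w_sub in_z_neq0 out_w_neq0 (ltn0Sn _) gap.
have := deg_sum (R_sub_A z_in_R) (R_sub_A w_in_R); have := indeg_z_le; have := outdeg_w_le.
by rewrite card_A_split; have := size_path_lt_card_R; lia.
Qed.
End LongestCycleAndPath.

Theorem degree_sum_hamiltonian : exists s, [/\ uniq s, cycle f s & s =i A].
Proof.
pose cycle_of m := exists s, [/\ uniq s, cycle f s, {subset s <= A} & size s = m].
have [_ [[s [Us Cs sA <-]] s_longest]] :
    exists m, cycle_of m /\ forall m', cycle_of m' -> m' <= m.
  apply: (@ex_maximum _ #|T|); first by exists 0, [::].
  by move=> _ [s [Us _ _ <-]]; rewrite -card_set_uniq // max_card.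
have [covered|/subsetPn[r rA rNs]] := boolP (A \subset [set v in s]).
  by exists s; split=> // v; apply/idP/idP => [/sA|/(subsetP covered)]; rewrite ?in_set.
pose R := A :\: [set v in s].
pose path_of m := exists z p, [/\ uniq (z :: p), path f z p, {subset z :: p <= R} & size p = m].
have [_ [[z [p [Up pp pR <-]]] p_longest]] :
    exists m, path_of m /\ forall m', path_of m' -> m' <= m.
  apply: (@ex_maximum _ #|T|).
    by exists 0, r, [::]; split=> // v; rewrite inE => /eqP ->; rewrite inE rNs.
  move=> _ [z [p [Up _ _ <-]]]; apply: ltnW.
  by rewrite -[(size p).+1]/(size (z :: p)) -card_set_uniq // max_card.
case: (no_path_off_longest_cycle Us Cs sA _ Up pp pR) => [s' Us' Cs' s'A|z' p' Up' pp' p'R].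
  by apply: s_longest; exists s'.
by apply: p_longest; exists z', p'.
Qed.
End DegreeSumHamiltonCycle.

Section DegreeSumHamiltonConnected.
Variables (T : finType) (e : rel T) (H : {set T}) (x y : T).
Hypothesis e_loopless : loopless e.
Hypothesis deg_sum :
  forall a b, a \in H -> b \in H -> #|H|.+1 <= indeg_in e H a + outdeg_in e H b.
Hypotheses (xH : x \in H) (yH : y \in H) (xy : x != y).

(* Identifying [y] with [x]: arcs into [y] become arcs into [x], so a Hamilton
   cycle of the contraction is a Hamilton path from [x] to [y] of [H]. *)
Let A := H :\ y.
Let g := [rel u v | (u != v) && (if v == x then e u y else e u v)].

Lemma x_in_A : x \in A. Proof. by rewrite in_setD1 xy. Qed.

Lemma outdeg_contract b : b \in A -> outdeg_in e H b <= (outdeg_in g A b).+1.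
Proof.
move=> bA; have [->|bNx] := eqVneq b x.
  rewrite /outdeg_in (cardsD1 y [set _ in H | _]) -add1n; apply: leq_add (leq_b1 _) _.
  apply/subset_leq_card/subsetP => v; rewrite in_setD1 !in_set => /and3P[vy vH exv].
  have xv := edge_neq e_loopless exv; have vx : (v == x) = false by rewrite eq_sym; apply/negbTE.
  by rewrite in_set1 vy vH /= xv vx.
rewrite /outdeg_in (cardsD1 x [set _ in H | _]) -add1n; apply: leq_add (leq_b1 _) _.
pose h v := if v == y then x else v.
have h_inj : {in [set v in H | e b v] :\ x &, injective h}.
  move=> v1 v2; rewrite !in_setD1 => /andP[v1x _] /andP[v2x _]; rewrite /h.
  case: eqP => [->|_]; case: eqP => [->|_] // E; first by move: v2x; rewrite -E eqxx.
  by move: v1x; rewrite E eqxx.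
rewrite -(card_in_imset h_inj); apply/subset_leq_card/subsetP => _ /imsetP[v + ->].
rewrite in_setD1 in_set => /and3P[vx vH ebv]; rewrite /h in_set.
case: eqP => [vy|/eqP vNy]; first by rewrite x_in_A /= bNx eqxx -vy.
by rewrite in_setD1 vNy vH /= (negbTE vx) (edge_neq e_loopless ebv).
Qed.

Lemma indeg_contract a : a \in A -> indeg_in e H (if a == x then y else a) <= (indeg_in g A a).+1.
Proof.
move=> aA; have [->|aNx] := eqVneq a x; rewrite ?eqxx.
  rewrite /indeg_in (cardsD1 x [set _ in H | _]) -add1n; apply: leq_add (leq_b1 _) _.
  apply/subset_leq_card/subsetP => v; rewrite in_setD1 !in_set => /and3P[vx vH evy].
  by rewrite in_set1 (edge_neq e_loopless evy) vH /= vx eqxx.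
rewrite /indeg_in (cardsD1 y [set _ in H | _]) -add1n.
apply: leq_add (leq_b1 _) _; apply/subset_leq_card/subsetP => v.
rewrite in_setD1 !in_set => /and3P[vy vH eva].
by rewrite in_set1 vy vH /= (edge_neq e_loopless eva) (negbTE aNx).
Qed.

Lemma deg_sum_contract a b : a \in A -> b \in A -> #|A| <= indeg_in g A a + outdeg_in g A b.
Proof.
have AH v : v \in A -> v \in H by rewrite in_setD1 => /andP[].
move=> aA bA; have aH : (if a == x then y else a) \in H by case: ifP => _; last exact: AH.
have := deg_sum aH (AH b bA); have := indeg_contract aA; have := outdeg_contract bA.
have : #|A| = #|H| - 1 by rewrite /A (cardsD1 y H) yH add1n subn1.
lia.
Qed.

Lemma path_uncontract u q : x \notin q -> path g u (rcons q x) -> path e u (rcons q y).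
Proof.
elim: q u => [|v q IH] u /=; first by rewrite eqxx !andbT => _ /andP[].
rewrite inE negb_or => /andP[xv xq] /andP[/andP[_ guv] pv].
by rewrite eq_sym (negbTE xv) in guv; rewrite guv IH.
Qed.

Lemma contraction_ham_path : exists p,
  [/\ path e x p, last x p = y, uniq (x :: p) & forall v, (v \in x :: p) = (v \in H)].
Proof.
have g_loopless : loopless g by move=> v; rewrite /= eqxx.
have [s [Us Cs sA]] := degree_sum_hamiltonian g_loopless deg_sum_contract.
have xs : x \in s by rewrite sA x_in_A.
move: (rot_index xs); set q := drop _ _ ++ _ => Es.
have Uq : uniq (x :: q) by rewrite -Es rot_uniq.
have Cq : cycle g (x :: q) by rewrite -Es rot_cycle.
have mem_q v : (v \in x :: q) = (v \in A) by rewrite -Es mem_rot sA.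
exists (rcons q y); split.
- by apply: path_uncontract Cq; case/andP: Uq.
- exact: last_rcons.
- by rewrite -rcons_cons rcons_uniq Uq andbT mem_q in_setD1 eqxx.
- by move=> v; rewrite -rcons_cons mem_rcons inE mem_q in_setD1; case: eqVneq => [->|].
Qed.
End DegreeSumHamiltonConnected.

Theorem degree_sum_ham_connected (T : finType) (e : rel T) (H : {set T}) : loopless e ->
  (forall a b, a \in H -> b \in H -> #|H|.+1 <= indeg_in e H a + outdeg_in e H b) ->
  ham_connected_on e H.
Proof. by move=> e_loopless deg_sum x y xH yH xy; apply: contraction_ham_path. Qed.

Section LongestSCycle.
Variables (T : finType) (e : rel T) (S c : seq T).
Hypothesis c_longest : longest_S_cycle e S c.

Let H := [set v | v \notin c].

Lemma c_uniq : uniq c. Proof. by case: c_longest => [[[]]]. Qed.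

Lemma setC_H : ~: H = [set v in c].
Proof. by apply/setP => v; rewrite !inE negbK. Qed.

Lemma card_T_split : #|T| = size c + #|H|.
Proof. by rewrite -(cardsC H) setC_H card_set_uniq ?c_uniq // addnC. Qed.

(* Otherwise the path could be inserted into [c] after [u], giving a longer S-cycle. *)
Lemma no_detour u x p : u \in c -> e u x -> path e x p -> uniq (x :: p) ->
  {subset x :: p <= H} -> ~~ e (last x p) (next c u).
Proof.
move=> uc eux px Ux xH; apply/negP => el.
case: c_longest => [[[c_ge2 Uc Cc] [i Sc]] c_max].
have U2 : uniq (rot i c) by rewrite rot_uniq.
have C2 : cycle e (rot i c) by rewrite rot_cycle.
have N2 : next (rot i c) u = next c u by rewrite next_rot.
have u2 : u \in rot i c by rewrite mem_rot.
have M2 : rot i c =i c := mem_rot i c.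
have size2 : size (rot i c) = size c := size_rot i c.
move: U2 C2 N2 u2 M2 size2 Sc; move: (rot i c) => c2 U2 C2 N2 u2.
case/splitPr: u2 U2 C2 N2 => a b U2 C2 N2 M2 size2 Sc; rewrite -N2 in el.
have xNc v : v \in x :: p -> v \notin a ++ u :: b by rewrite M2 => /xH; rewrite inE.
have [Uc' Cc'] := cycle_insert_path U2 C2 Ux xNc eux px el.
have : S_cycle e S (a ++ u :: (x :: p) ++ b).
  split; first split=> //.
    rewrite -size2 in c_ge2; apply: leq_trans c_ge2 _.
    by rewrite !size_cat leq_add2l /= ltnS size_cat; apply/leqW/leq_addl.
  exists 0; rewrite rot0; apply: subseq_trans Sc _; apply: cat_subseq => //=.
  by rewrite eqxx; apply: (suffix_subseq (x :: p)).
by move/c_max; rewrite -size2 !size_cat leq_add2l /= ltnS size_cat /= ltnNge leq_addl.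
Qed.

(* [next c] maps the in-neighbours of [z] on [c] into [c], avoiding the out-neighbours
   of the last vertex of the path by [no_detour]. *)
Lemma card_cycle_nbrs_path z p : path e z p -> uniq (z :: p) -> {subset z :: p <= H} ->
  indeg_in e (~: H) z + outdeg_in e (~: H) (last z p) <= size c.
Proof.
move=> pz Uz zH; rewrite /indeg_in /outdeg_in setC_H -(card_set_uniq c_uniq).
rewrite -(card_imset [set y in [set v in c] | e y z] (next_inj c_uniq)).
apply: disjoint_leq_card.
- by apply/subsetP => _ /imsetP[u + ->]; rewrite !in_set mem_next => /andP[].
- by apply/subsetP => v; rewrite !in_set => /andP[].
rewrite disjoint_subset; apply/subsetP => _ /imsetP[u + ->].
rewrite !in_set => /andP[uc euz]; rewrite inE !in_set negb_and mem_next uc.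
exact: no_detour.
Qed.

Let d := (#|T| + size S).+1 %/ 2 - 1.
Hypothesis deg : min_semideg_ge e d.

Lemma deg_sum_path_ends z p : path e z p -> uniq (z :: p) -> {subset z :: p <= H} ->
  #|H| + size S - 2 <= indeg_in e H z + outdeg_in e H (last z p).
Proof.
move=> pz Uz zH; have := card_cycle_nbrs_path pz Uz zH.
have [_ dz] := deg z; have [dw _] := deg (last z p).
rewrite (indeg_split _ H) in dz; rewrite (outdeg_split _ H) in dw.
have : #|T| + size S <= 2 * d + 2 by rewrite /d; lia.
rewrite card_T_split; lia.
Qed.

Hypothesis e_loopless : loopless e.
Hypothesis S_gt0 : 0 < size S.

Lemma deg_sum_vertex v : v \in H -> #|H| + size S - 2 <= indeg_in e H v + outdeg_in e H v.
Proof. by move=> vH; apply: (deg_sum_path_ends (p := [::])) => // w; rewrite inE => /eqP ->. Qed.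

Lemma out_closed_covers_H (X : {set T}) a : X \subset H -> a \in X ->
  {in X & H, forall u v, e u v -> v \in X} -> H \subset X.
Proof.
move=> XH aX closedX; apply/subsetP => b bH; apply: contraT => bNX.
pose Y := H :\: X.
have cardHXY : #|H| = #|X| + #|Y| by rewrite -(cardsID X H) (setIidPr XH).
have XHs u : u \in X -> u \in H by move/(subsetP XH).
have YH v : v \in Y -> v \in H by rewrite in_setD => /andP[].
have bY : b \in Y by rewrite in_setD bNX.
have X_gt0 : 0 < #|X| by apply/card_gt0P; exists a.
have Y_gt0 : 0 < #|Y| by apply/card_gt0P; exists b.
have out_X u : u \in X -> outdeg_in e H u <= #|X| - 1.
  move=> uX; rewrite -(cardsD1_in uX).
  by apply: (outdeg_in_leq e_loopless) => v vH; apply: closedX.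
have in_Y v : v \in Y -> indeg_in e H v <= #|Y| - 1.
  move=> vY; rewrite -(cardsD1_in vY); apply: (indeg_in_leq e_loopless) => w wH ewv.
  rewrite in_setD wH andbT; apply: contraT => /negPn wX.
  have vX := closedX w v wX (YH v vY) ewv.
  by move: vY; rewrite in_setD vX.
have [[v u] /= /and3P[vY uX evu] | no_entry] :=
  pickP [pred vu : T * T | [&& vu.1 \in Y, vu.2 \in X & e vu.1 vu.2]].
  have Uvu : uniq [:: v; u].
    by rewrite /= inE andbT; apply: contraTneq uX => <-; move: vY; rewrite in_setD => /andP[].
  have pvu : path e v [:: u] by rewrite /= evu.
  have vuH : {subset [:: v; u] <= H}.
    by move=> w; rewrite !in_cons in_nil orbF => /orP[]/eqP ->; [apply: YH | apply: XHs].
  have := deg_sum_path_ends pvu Uvu vuH; have := in_Y v vY; have := out_X u uX.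
  by move: X_gt0 Y_gt0 S_gt0; rewrite /= cardHXY; clear; lia.
have in_X u : u \in X -> indeg_in e H u <= #|X| - 1.
  move=> uX; rewrite -(cardsD1_in uX); apply: (indeg_in_leq e_loopless) => w wH ewu.
  apply: contraT => wNX; have := no_entry (w, u).
  by rewrite /= uX ewu in_setD wNX wH.
have out_Y v : v \in Y -> outdeg_in e H v <= #|Y| - 1.
  move=> vY; rewrite -(cardsD1_in vY); apply: (outdeg_in_leq e_loopless) => w wH evw.
  rewrite in_setD wH andbT; apply/negP => wX; have := no_entry (v, w).
  by rewrite /= vY wX evw.
have := deg_sum_vertex (XHs a aX); have := in_X a aX; have := out_X a aX.
have := deg_sum_vertex (YH b bY); have := in_Y b bY; have := out_Y b bY.
by move: X_gt0 Y_gt0 S_gt0; rewrite cardHXY; clear; lia.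
Qed.

Lemma connect_H x y : x \in H -> y \in H -> connect (induced e H) x y.
Proof.
move=> xH yH; pose X := [set v in H | connect (induced e H) x v].
have : H \subset X.
  apply: (@out_closed_covers_H _ x) => //.
  - by apply/subsetP => v; rewrite in_set => /andP[].
  - by rewrite in_set xH connect0.
  move=> u v; rewrite in_set => /andP[uH xu] vH euv; rewrite in_set vH.
  by apply: connect_trans xu (connect1 _); rewrite /induced /= uH vH euv.
by move/subsetP/(_ y yH); rewrite in_set => /andP[].
Qed.

Lemma deg_sum_H x y : x \in H -> y \in H ->
  #|H| + size S - 2 <= indeg_in e H x + outdeg_in e H y.
Proof.
move=> xH yH; have [p [pp <- Up pH]] := connect_induced_path xH (connect_H xH yH).
exact: deg_sum_path_ends.
Qed.

Lemma ham_connected_H : 3 <= size S -> ham_connected_on e H.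
Proof.
move=> S_ge3; apply: degree_sum_ham_connected e_loopless _ => a b aH bH.
by have := deg_sum_H aH bH; move: S_ge3; clear; lia.
Qed.

Lemma strong_on_H_setD (X : {set T}) : X \subset H -> #|X| < size S -> strong_on e (H :\: X).
Proof.
move=> XH ltXS; apply: strong_on_connect => u v uB vB; apply: contraT => uNv.
set B := H :\: X in uB vB *; pose Y := [set w in B | connect (induced e B) u w].
have BH w : w \in B -> w \in H by rewrite in_setD => /andP[].
have uY : u \in Y by rewrite in_set uB connect0.
have vNY : v \in B :\: Y by rewrite in_setD vB in_set vB (negbTE uNv).
have cardB : #|B| = #|H| - #|X| by rewrite cardsD (setIidPr XH).
have cardBY : #|Y| + #|B :\: Y| = #|B|.
  by rewrite -(cardsID Y B) (setIidPr _) //; apply/subsetP => w; rewrite in_set => /andP[].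
have out_u : outdeg_in e H u <= #|(Y :|: X) :\ u|.
  apply: (outdeg_in_leq e_loopless) => w wH euw; rewrite in_setU.
  have [wX|wNX] := boolP (w \in X); first by rewrite orbT.
  have wB : w \in B by rewrite in_setD wNX.
  by rewrite in_set wB /=; apply/orP; left; apply: connect1; rewrite /induced /= uB wB euw.
have in_v : indeg_in e H v <= #|((B :\: Y) :|: X) :\ v|.
  apply: (indeg_in_leq e_loopless) => w wH ewv; rewrite in_setU.
  have [wX|wNX] := boolP (w \in X); first by rewrite orbT.
  have wB : w \in B by rewrite in_setD wNX.
  rewrite in_setD wB in_set wB andbT orbF; apply: contra uNv => uw.
  by apply: connect_trans uw (connect1 _); rewrite /induced /= wB vB ewv.
have uYX : u \in Y :|: X by rewrite in_setU uY.
have vBYX : v \in (B :\: Y) :|: X by rewrite in_setU vNY.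
move: out_u in_v; rewrite (cardsD1_in uYX) (cardsD1_in vBYX).
have := leq_of_leqif (leq_card_setU Y X).
have := leq_of_leqif (leq_card_setU (B :\: Y) X).
have Y_gt0 : 0 < #|Y| by apply/card_gt0P; exists u.
have BY_gt0 : 0 < #|B :\: Y| by apply/card_gt0P; exists v.
have := deg_sum_H (BH v vB) (BH u uB).
have := subset_leq_card XH.
by move: ltXS cardB cardBY Y_gt0 BY_gt0; clear; lia.
Qed.

Lemma size_S_le_card_H : size c < #|T| -> size S <= #|H|.
Proof.
move=> c_not_ham; have /card_gt0P[v vH] : 0 < #|H| by move: c_not_ham; rewrite card_T_split; lia.
have := deg_sum_H vH vH.
have := indeg_in_ltn e_loopless vH; have := outdeg_in_ltn e_loopless vH.
by clear; lia.
Qed.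

Lemma cycle_vertex_out_nbr_in_H u : size c <= d -> u \in c -> exists2 x, x \in H & e u x.
Proof.
move=> le_cd uc; have [du _] := deg u; rewrite (outdeg_split _ H) setC_H in du.
have uC : u \in [set v in c] by rewrite in_set.
have := outdeg_in_ltn e_loopless uC; rewrite card_set_uniq ?c_uniq // => lt.
have /card_gt0P[x] : 0 < outdeg_in e H u by move: du lt le_cd; clear; lia.
by rewrite in_set => /andP[xH eux]; exists x.
Qed.

Lemma cycle_vertex_in_nbr_in_H w : size c <= d -> w \in c -> exists2 y, y \in H & e y w.
Proof.
move=> le_cd wc; have [_ dw] := deg w; rewrite (indeg_split _ H) setC_H in dw.
have wC : w \in [set v in c] by rewrite in_set.
have := indeg_in_ltn e_loopless wC; rewrite card_set_uniq ?c_uniq // => lt.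
have /card_gt0P[y] : 0 < indeg_in e H w by move: dw lt le_cd; clear; lia.
by rewrite in_set => /andP[yH eyw]; exists y.
Qed.

Lemma size_S_add_card_H_le : size S + #|H| <= size c.
Proof.
rewrite leqNgt; apply/negP => lt.
have le_cd : size c <= d by have := card_T_split; move: lt; rewrite /d; clear; lia.
have [u uc] : exists u, u \in c.
  by case: c_longest => [[[]]]; case: (c) => // u r _ _ _; exists u; apply: mem_head.
have [x xH eux] := cycle_vertex_out_nbr_in_H le_cd uc.
have wc : next c u \in c by rewrite mem_next.
have [y yH eyw] := cycle_vertex_in_nbr_in_H le_cd wc.
have [p [pp lp Up pH]] := connect_induced_path xH (connect_H xH yH).
by have := no_detour uc eux pp Up pH; rewrite lp eyw.
Qed.

Lemma card_H_le_half : #|H| <= (#|T| - size S) %/ 2.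
Proof.
have := size_S_add_card_H_le; have := card_T_split.
by clear; lia.
Qed.
End LongestSCycle.

Theorem lemma6 (T : finType) (e : rel T) (S c : seq T) :
  loopless e ->
  3 <= size S ->
  uniq S ->
  min_semideg_ge e ((#|T| + size S).+1 %/ 2 - 1) ->
  longest_S_cycle e S c ->
  size c < #|T| ->
  let H := [set v | v \notin c] in
  [/\ ham_connected_on e H,
      (forall x y, x \in H -> y \in H ->
         #|H| + size S - 2 <= indeg_in e H x + outdeg_in e H y),
      (forall X : {set T}, X \subset H -> #|X| <= 2 -> strong_on e (H :\: X))
    & size S <= #|H| <= (#|T| - size S) %/ 2].
Proof.
move=> e_loopless S_ge3 _ deg c_longest c_not_ham H.
have S_gt0 : 0 < size S := ltnW (ltnW S_ge3).
split.
- exact (ham_connected_H c_longest deg e_loopless S_gt0 S_ge3).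
- exact: deg_sum_H c_longest deg e_loopless S_gt0.
- move=> X XH X_le2.
  exact (strong_on_H_setD c_longest deg e_loopless S_gt0 XH (leq_ltn_trans X_le2 S_ge3)).
- by rewrite (size_S_le_card_H c_longest deg e_loopless S_gt0 c_not_ham)
    (card_H_le_half c_longest deg e_loopless S_gt0).
Qed.
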